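(* Let $\lambda,\mu,\lambda',\mu',k,k'\in\mathbb{C}$, $p,p'\in\mathbb{Z}_2$ and $l,l'\in\mathbb{Z}^+$, and write $\delta=\mu-\lambda$, $\delta'=\mu'-\lambda'$. If the $\mathcal{K}$-modules $\mathrm{SQ}^{k,p,l}_{\lambda,\mu}$ and $\mathrm{SQ}^{k',p',l'}_{\lambda',\mu'}$ are equivalent, then $l=l'$, $\delta-k=\delta'-k'$, and the parity of the equivalence is $p-p'$ (even if $p=p'$, odd otherwise). There are no equivalences of mixed parity between such modules.
   Context: Work over $\mathbb{C}$ on the superline $\mathbb{R}^{1|1}$ in the polynomial category. Let $\mathbb{C}[x,\xi]$ be the polynomial superalgebra with even coordinate $x$ and odd coordinate $\xi$ ($\xi^2=0$), and set $D=\partial_\xi+\xi\partial_x$, $\bar D=\partial_\xi-\xi\partial_x$. For $F\in\mathbb{C}[x,\xi]$ put $X_F=F\partial_x+\tfrac12 D(F)\bar D$; the Lie superalgebra of contact vector fields is $\mathcal{K}=\{X_F:F\in\mathbb{C}[x,\xi]\}$. For a superspace $V$, $V^\Pi$ is $V$ with parity reversed, and $V^{p\Pi}$ is $V$ if $p$ is even and $V^\Pi$ if $p$ is odd. For $\nu\in\mathbb{C}$ the tensor density module is $\mathcal{F}_\nu=\alpha^\nu\mathbb{C}[x,\xi]$ ($\alpha^\nu$ a formal even symbol) with action $L_\nu(X_F)(\alpha^\nu G)=\alpha^\nu(X_F(G)+\nu\,\partial_x(F)\,G)$. For $\lambda,\mu\in\mathbb{C}$ write $\delta=\mu-\lambda$.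 For $z\in\mathbb{C}$ define formal symbols $\bar D^z_0=e^{i\pi z/2}\partial_x^{z/2}$ (even) and $\bar D^z_1=e^{i\pi(z-1)/2}\partial_x^{(z-1)/2}\bar D$ (odd). For $k\in\mathbb{C}$, $p\in\mathbb{Z}_2$, the space of pseudodifferential operators is $\Psi^{k,p}_{\lambda,\mu}=\{\alpha^{\delta}\sum_{j\in\mathbb{N}}T_{2k-j}\bar D^{2k-j}_{p+(j\bmod 2)}:T_{2k-j}\in\mathbb{C}[x,\xi]\}$ (formal series). Composition is defined by $\bar D^{z'}_{p'}\circ\bar D^z_p=\bar D^{z+z'}_{p+p'}$, $[\bar D,\partial_x^z]=0$ and the generalized Leibniz rule $\partial_x^z\circ F=\sum_{j\in\mathbb{N}}\binom{z}{j}\partial_x^j(F)\circ\partial_x^{z-j}$, and $\mathcal{K}$ acts by $L_{\lambda,\mu}(X)(T)=L_\mu(X)\circ T-(-1)^{|X||T|}T\circ L_\lambda(X)$; the spaces $\Psi^{k-1/2,p+1}_{\lambda,\mu}\subset\Psi^{k,p}_{\lambda,\mu}$ are $\mathcal{K}$-submodules. For $l\in\mathbb{Z}^+$, $\mathrm{SQ}^{k,p,l}_{\lambda,\mu}=\Psi^{k,p}_{\lambda,\mu}/\Psi^{k-l/2,\,p+l}_{\lambda,\mu}$, a $\mathcal{K}$-module with successive composition factors $\mathcal{F}^{p\Pi}_{\delta-k},\mathcal{F}^{(p+1)\Pi}_{\delta-k+1/2},\dots,\mathcal{F}^{(p+l-1)\Pi}_{\delta-k+(l-1)/2}$. Equivalences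 are $\mathcal{K}$-module isomorphisms, which may be even, odd or of mixed parity. *)

From HB Require Import structures.
From mathcomp Require Import all_boot all_order all_algebra.
From mathcomp Require Import reals Rstruct complex.
Set Implicit Arguments.
Unset Strict Implicit.
Unset Printing Implicit Defensive.
Import Order.TTheory GRing.Theory Num.Theory.
Local Open Scope ring_scope.

Definition CC : fieldType := complex Rdefinitions.R.

(** Superfunctions: F = f0(x) + xi f1(x) in C[x,xi], stored as (f0, f1).
    Even part = (f0,0), odd part = (0,f1). *)
Definition sfun : Type := ({poly CC} * {poly CC})%type.

Definition sf_mul (F G : sfun) : sfun := (F.1 * G.1, F.2 * G.1 + F.1 * G.2).
Definition sf_scale (c : CC) (F : sfun) : sfun := (c *: F.1, c *: F.2).
Definition sf_dx (F : sfun) : sfun := (F.1^`(), F.2^`()).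
Definition sf_dxn (n : nat) (F : sfun) : sfun := (F.1^`(n), F.2^`(n)).
(** D = d_xi + xi d_x  and  Dbar = d_xi - xi d_x *)
Definition sf_D (F : sfun) : sfun := (F.2, F.1^`()).
Definition sf_Dbar (F : sfun) : sfun := (F.2, - F.1^`()).
Definition sf_sigma (F : sfun) : sfun := (F.1, - F.2).
(** homogeneous part of parity g (false = even, true = odd) *)
Definition sf_part (g : bool) (F : sfun) : sfun := if g then (0, F.2) else (F.1, 0).

Definition binomC (w : CC) (n : nat) : CC :=
  (\prod_(i < n) (w - i%:R)) / (n`!)%:R.

(** Composition rule  Dbar^z_q o H = sum_m (cmp_coef z q H m) Dbar^(z-m)_(q+m),
    obtained from the generalized Leibniz rule (with Dbar^z_0 = e^{i pi z/2} d_x^{z/2},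
    Dbar^z_1 = Dbar^(z-1)_0 o Dbar, Dbar o H = Dbar(H) + (-1)^{|H|} H Dbar):
    q = 0 : m = 2n   : (-1)^n binom(z/2, n) H^{(n)};          m odd : 0
    q = 1 : m = 2n   : (-1)^n binom((z-1)/2, n) (sigma H)^{(n)}
            m = 2n+1 : (-1)^n binom((z-1)/2, n) (Dbar H)^{(n)}  *)
Definition cmp_coef (z : CC) (q : bool) (H : sfun) (m : nat) : sfun :=
  if ~~ q then
    (if odd m then 0
     else sf_scale ((-1) ^+ m./2 * binomC (z / 2%:R) m./2) (sf_dxn m./2 H))
  else if odd m then
    sf_scale ((-1) ^+ m./2 * binomC ((z - 1) / 2%:R) m./2) (sf_dxn m./2 (sf_Dbar H))
  else
    sf_scale ((-1) ^+ m./2 * binomC ((z - 1) / 2%:R) m./2) (sf_dxn m./2 (sf_sigma H)).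

(** An element of SQ^{k,p,l}_{lam,mu} is represented by its coefficients
    (T_0, ..., T_{l-1}), standing for  alpha^delta sum_{j<l} T_j Dbar^{2k-j}_{p+j}
    modulo Psi^{k-l/2, p+l}. *)
Definition SQ (l : nat) : Type := 'I_l -> sfun.

Definition sq_ext (l : nat) (T : SQ l) (j : nat) : sfun := odflt 0 (omap T (insub j)).

(** Action L_{lam,mu}(X_F)(T) = L_mu(X_F) o T - (-1)^{|X_F||T|} T o L_lam(X_F)
    for F homogeneous of parity fodd, computed in the quotient (coefficient of
    index i, i.e. of Dbar^{2k-i}_{p+i}).  Here
    L_nu(X_F) = -F Dbar^2_0 + 1/2 D(F) Dbar^1_1 + nu F' Dbar^0_0. *)
Definition act_h (lam mu k : CC) (p : bool) (l : nat) (fodd : bool) (F : sfun)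
  (T : SQ l) (i : 'I_l) : sfun :=
  let t := sq_ext T in
  let A := - sf_mul F (t i.+2)
           + sf_scale (1 / 2%:R) (sf_mul (sf_D F) (sf_sigma (t i.+1)))
           + sf_mul F (sf_dx (t i))
           + sf_scale (1 / 2%:R) (sf_mul (sf_D F) (sf_Dbar (t i)))
           + sf_scale mu (sf_mul (sf_dx F) (t i)) in
  let tt (j : nat) := if fodd then (if p (+) odd j then - sf_sigma (t j) else sf_sigma (t j))
                      else t j in
  let z (j : nat) := 2%:R * k - j%:R in
  let q (j : nat) := p (+) odd j in
  let B := \sum_(j < i.+3)
             sf_mul (tt j)
               (cmp_coef (z j) (q j) (- F) (i.+2 - j)
                + (if (j <= i.+1)%N then
                     cmp_coef (z j) (q j) (sf_scale (1 / 2%:R) (sf_D F)) (i.+1 - j) else 0)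
                + (if (j <= i)%N then
                     cmp_coef (z j) (q j) (sf_scale lam (sf_dx F)) (i - j) else 0)) in
  A - B.

Definition SQ_act (lam mu k : CC) (p : bool) (l : nat) (F : sfun) (T : SQ l) : SQ l :=
  fun i => act_h lam mu k p false (F.1, 0) T i + act_h lam mu k p true (0, F.2) T i.

(** Parity: the piece of parity g of T_j has total parity g + p + j. *)
Definition sq_even (p : bool) (l : nat) (T : SQ l) : Prop :=
  forall (j : 'I_l) (g : bool), g (+) p (+) odd j -> sf_part g (T j) = 0.
Definition sq_odd (p : bool) (l : nat) (T : SQ l) : Prop :=
  forall (j : 'I_l) (g : bool), ~~ (g (+) p (+) odd j) -> sf_part g (T j) = 0.

Definition sq_linear (l l' : nat) (phi : SQ l -> SQ l') : Prop :=
  (forall T1 T2 : SQ l, phi (fun i => T1 i + T2 i) = (fun i => phi T1 i + phi T2 i)) /\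
  (forall (c : CC) (T : SQ l), phi (fun i => sf_scale c (T i)) = (fun i => sf_scale c (phi T i))).

Definition SQ_equiv (lam mu k : CC) (p : bool) (l : nat)
  (lam' mu' k' : CC) (p' : bool) (l' : nat) (phi : SQ l -> SQ l') : Prop :=
  [/\ sq_linear phi, bijective phi &
      forall (F : sfun) (T : SQ l), phi (SQ_act lam mu k p F T) = SQ_act lam' mu' k' p' F (phi T)].

Definition even_map (p p' : bool) (l l' : nat) (phi : SQ l -> SQ l') : Prop :=
  forall T, (sq_even p T -> sq_even p' (phi T)) /\ (sq_odd p T -> sq_odd p' (phi T)).
Definition odd_map (p p' : bool) (l l' : nat) (phi : SQ l -> SQ l') : Prop :=
  forall T, (sq_even p T -> sq_odd p' (phi T)) /\ (sq_odd p T -> sq_even p' (phi T)).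

From HB Require Import structures.
From mathcomp Require Import all_boot all_order all_algebra.
From mathcomp Require Import reals Rstruct complex.
From mathcomp Require Import ring zify.
From Stdlib Require Import FunctionalExtensionality Classical.
Import GRing.Theory Num.Theory.
Local Open Scope ring_scope.

(* The even fields X_1 and X_x act coefficientwise on SQ^{k,p,l}_{lam,mu}: X_1 is
   d/dx, and X_x multiplies the coefficient of x^n xi^g in T_i by c + (i + g + 2n)/2,
   where c = delta - k.  So the eigenvalues of X_x on the kernel of X_1 are exactly
   c, c + 1/2, ..., c + l/2.  An equivalence intertwines both operators, hence
   preserves this set, which forces delta - k = delta' - k' and l = l'.  Moreover T
   is even (resp. odd) iff all its weights i + g + 2n have the parity of p (resp.
   p + 1), i.e. iff T is killed by a finite product of the X_x - (c + m/2) with m of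
   that parity; this property is again preserved, and it determines the parity of
   the equivalence. *)

Lemma sf_pairD (a b c d : {poly CC}) : ((a, b) : sfun) + (c, d) = (a + c, b + d).
Proof. by []. Qed.

Lemma sf_pairN (a b : {poly CC}) : - ((a, b) : sfun) = (- a, - b).
Proof. by []. Qed.

Lemma sf_mul0r (H : sfun) : sf_mul 0 H = 0.
Proof. by rewrite /sf_mul /= !mul0r addr0. Qed.

Lemma sf_mulr0 (H : sfun) : sf_mul H 0 = 0.
Proof. by rewrite /sf_mul /= !mulr0 addr0. Qed.

Lemma sf_scaler0 c : sf_scale c 0 = 0.
Proof. by rewrite /sf_scale /= !scaler0. Qed.

Lemma sf_scale0r (H : sfun) : sf_scale 0 H = 0.
Proof. by rewrite /sf_scale !scale0r. Qed.

Lemma sf_scale1r (H : sfun) : sf_scale 1 H = H.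
Proof. by case: H => a b; rewrite /sf_scale !scale1r. Qed.

Lemma binomC0 w : binomC w 0 = 1.
Proof. by rewrite /binomC big_ord0 fact0 divr1. Qed.

Lemma binomC1 w : binomC w 1 = w.
Proof. by rewrite /binomC big_ord1 factS fact0 divr1 subr0. Qed.

Lemma size_deriv_leq {R : nzRingType} (p : {poly R}) : (size p^`() <= size p - 1)%N.
Proof.
have [->|p0] := eqVneq p 0; first by rewrite deriv0 size_poly0.
by rewrite leq_subRL ?add1n ?lt_size_deriv // (leq_trans _ (lt_size_deriv p0)).
Qed.

Definition sf_size (H : sfun) : nat := maxn (size H.1) (size H.2).

Lemma sf_dxn_eq0 n (H : sfun) : (sf_size H <= n)%N -> sf_dxn n H = 0.
Proof. by rewrite geq_max => /andP[h1 h2]; rewrite /sf_dxn !derivn_poly0. Qed.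

Lemma cmp_coef_at0 z q H : cmp_coef z q H 0 = if q then sf_sigma H else H.
Proof.
by case: q; rewrite /cmp_coef /= expr0 mul1r binomC0 sf_scale1r /sf_dxn !derivn0; case: H.
Qed.

Lemma cmp_coef_at1 z q H : cmp_coef z q H 1 = if q then sf_Dbar H else 0.
Proof.
by case: q; rewrite /cmp_coef //= expr0 mul1r binomC0 sf_scale1r /sf_dxn !derivn0;
  case: (sf_Dbar H).
Qed.

Lemma cmp_coef_at2 z q H : cmp_coef z q H 2 =
  if q then sf_scale (- ((z - 1) / 2%:R)) (sf_dx (sf_sigma H))
  else sf_scale (- (z / 2%:R)) (sf_dx H).
Proof. by case: q; rewrite /cmp_coef /= expr1 binomC1 mulN1r /sf_dxn !derivn1. Qed.

Lemma cmp_coef_eq0 z q H m :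
  (sf_size (if odd m then sf_Dbar H else H) <= m./2)%N -> cmp_coef z q H m = 0.
Proof.
move=> /sf_dxn_eq0 H0; rewrite /cmp_coef.
case: q; case: (odd m) H0 => H0 /=; rewrite ?H0 ?sf_scaler0 //.
by move: H0; case: H => a b; rewrite /sf_dxn /= derivnN => -[-> ->]; rewrite oppr0 sf_scaler0.
Qed.

(* For affine F, only the terms of index m <= 2 of the Leibniz expansion of
   T o L_lam(X_F) survive. *)
Section AffineLeibniz.
Variables (z : CC) (q : bool) (f : {poly CC}).
Hypothesis hf : (size f <= 2)%N.

Let size_f' : (size f^`() <= 1)%N.
Proof. by apply: leq_trans (size_deriv_leq f) _; rewrite leq_subLR. Qed.

Let deriv2_f : f^`()^`() = 0.
Proof. by rewrite -derivn1 -derivSn derivn_poly0. Qed.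

Lemma cmp_coef_oppF_eq0 m : (3 <= m)%N -> cmp_coef z q (- ((f, 0) : sfun)) m = 0.
Proof.
move=> hm; apply: cmp_coef_eq0; rewrite /sf_size /sf_Dbar /=.
case: ifP => hodd; rewrite /= ?derivN ?size_polyN ?size_poly0 ?max0n ?maxn0.
- by apply: leq_trans size_f' _; lia.
- by apply: leq_trans hf _; lia.
Qed.

Lemma cmp_coef_DF_eq0 c m : (2 <= m)%N -> cmp_coef z q (sf_scale c (sf_D (f, 0))) m = 0.
Proof.
move=> hm; apply: cmp_coef_eq0; rewrite /sf_size /sf_Dbar /=.
case: ifP => hodd;
  rewrite /= ?derivZ ?deriv0 ?scaler0 ?size_polyN ?size_poly0 ?max0n ?maxn0;
  by apply: leq_trans (size_scale_leq _ _) _; apply: leq_trans size_f' _; lia.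
Qed.

Lemma cmp_coef_dF_eq0 c m : (1 <= m)%N -> cmp_coef z q (sf_scale c (sf_dx (f, 0))) m = 0.
Proof.
move=> hm; apply: cmp_coef_eq0; rewrite /sf_size /sf_Dbar /sf_dx /=.
case: ifP => hodd;
  rewrite /= ?derivZ ?deriv2_f ?deriv0 ?scaler0 ?oppr0 ?size_polyN ?size_poly0 ?max0n ?maxn0 //.
by apply: leq_trans (size_scale_leq _ _) _; apply: leq_trans size_f' _; lia.
Qed.

(* The factors multiplying T_(i+2), T_(i+1) and T_i, respectively, in coefficient i
   of T o L_lam(X_F). *)
Lemma right_comp_shift0 : cmp_coef z q (- ((f, 0) : sfun)) 0 = (- f, 0).
Proof. by rewrite cmp_coef_at0 sf_pairN oppr0; case: q; rewrite /sf_sigma /= ?oppr0. Qed.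

Lemma right_comp_shift1 :
  cmp_coef z q (- ((f, 0) : sfun)) 1 + cmp_coef z q (sf_scale (1 / 2%:R) (sf_D (f, 0))) 0
  = (0, (1 / 2%:R) *: f^`()).
Proof.
rewrite cmp_coef_at1 cmp_coef_at0 sf_pairN oppr0 /sf_scale /sf_D /= scaler0.
case: q; rewrite /sf_Dbar /sf_sigma /= ?sf_pairD ?add0r ?addr0 ?oppr0 ?derivN ?opprK //.
have half : 1 - 1 / 2%:R = 1 / 2%:R :> CC by field.
by rewrite -{1}[f^`()]scale1r -scalerBl half.
Qed.

Lemma right_comp_shift2 lam :
  cmp_coef z q (- ((f, 0) : sfun)) 2 + cmp_coef z q (sf_scale (1 / 2%:R) (sf_D (f, 0))) 1
  + cmp_coef z q (sf_scale lam (sf_dx (f, 0))) 0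
  = ((z / 2%:R + lam) *: f^`(), 0).
Proof.
rewrite cmp_coef_at2 cmp_coef_at1 cmp_coef_at0; case: q;
  rewrite /sf_Dbar /sf_sigma /sf_scale /sf_D /sf_dx /= ?sf_pairD /=;
  rewrite ?(derivN, scaler0, deriv0, oppr0, addr0, scalerN, scaleNr, opprK) -?scalerDl;
  by congr (_ *: _, _); field.
Qed.

End AffineLeibniz.

Lemma sq_ext_ord (l : nat) (T : SQ l) (i : 'I_l) : sq_ext T i = T i.
Proof. by rewrite /sq_ext valK. Qed.

Lemma act_h_even_affine lam mu k p l (f : {poly CC}) (T : SQ l) (i : 'I_l) :
  (size f <= 2)%N ->
  act_h lam mu k p false (f, 0) T i =
  (f * (T i).1^`() + (mu - lam - k + i%:R / 2%:R) *: (f^`() * (T i).1),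
   f * (T i).2^`() + (mu - lam - k + (i%:R + 1) / 2%:R) *: (f^`() * (T i).2)).
Proof.
move=> hf; rewrite /act_h /= !big_ord_recr /= big1 ?add0r; last first.
  move=> j _; have hj := ltn_ord j.
  by rewrite cmp_coef_oppF_eq0 ?cmp_coef_DF_eq0 ?cmp_coef_dF_eq0 ?if_same ?addr0 ?sf_mulr0 //; lia.
have -> : (i.+1 < i)%N = false by lia.
have -> : (i.+2 - i = 2)%N by lia.
rewrite leqnSn leqnn ltnSn !ltnn !subnn !subSnn !addr0.
rewrite right_comp_shift0 right_comp_shift1 right_comp_shift2 !sq_ext_ord.
move: (sq_ext T i.+2) (sq_ext T i.+1) (T i) => [a2 b2] [a1 b1] [a0 b0].
rewrite /sf_mul /sf_scale /sf_D /sf_dx /sf_sigma /sf_Dbar /=.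
have -> : mu - lam - k + i%:R / 2%:R = mu - ((2 * k - i%:R) / 2%:R + lam) by field.
have -> : mu - lam - k + (i%:R + 1) / 2%:R = mu - ((2 * k - i%:R) / 2%:R + lam) + 1 / 2%:R
  by field.
rewrite !(sf_pairD, sf_pairN) deriv0 -!mul_polyC !(polyCB, polyCD); congr (_, _) => /=; ring.
Qed.

Lemma cmp_coef_zero z q m : cmp_coef z q 0 m = 0.
Proof.
apply: cmp_coef_eq0; rewrite /sf_size /sf_Dbar; case: odd => /=;
  by rewrite ?deriv0 ?oppr0 size_poly0.
Qed.

Lemma act_h_zero lam mu k p l b (T : SQ l) (i : 'I_l) : act_h lam mu k p b 0 T i = 0.
Proof.
have D0 : sf_D 0 = 0 by rewrite /sf_D /= deriv0.
have dx0 : sf_dx 0 = 0 by rewrite /sf_dx /= !deriv0.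
rewrite /act_h /= big1 => [|j _].
  by rewrite D0 dx0 !sf_mul0r !sf_scaler0 oppr0 !addr0.
by rewrite oppr0 D0 dx0 !sf_scaler0 !cmp_coef_zero !if_same !addr0 sf_mulr0.
Qed.

Lemma SQ_act_even_affine lam mu k p l (f : {poly CC}) (T : SQ l) (i : 'I_l) :
  (size f <= 2)%N ->
  SQ_act lam mu k p (f, 0) T i =
  (f * (T i).1^`() + (mu - lam - k + i%:R / 2%:R) *: (f^`() * (T i).1),
   f * (T i).2^`() + (mu - lam - k + (i%:R + 1) / 2%:R) *: (f^`() * (T i).2)).
Proof. by move=> hf; rewrite /SQ_act /= act_h_zero addr0 act_h_even_affine. Qed.

Definition sf_comp (g : bool) (H : sfun) : {poly CC} := if g then H.2 else H.1.

Lemma sf_compD g (H K : sfun) : sf_comp g (H + K) = sf_comp g H + sf_comp g K.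
Proof. by case: g. Qed.

Lemma sf_compZ g c (H : sfun) : sf_comp g (sf_scale c H) = c *: sf_comp g H.
Proof. by case: g. Qed.

Definition sq_coef l (T : SQ l) (i : 'I_l) (g : bool) (n : nat) : CC :=
  (sf_comp g (T i))`_n.
Arguments sq_coef {l}.

Definition sq_zero l : SQ l := fun=> 0.

Lemma sq_coef_zero l i g n : sq_coef (sq_zero l) i g n = 0.
Proof. by rewrite /sq_coef; case: g; rewrite /= coef0. Qed.

Lemma sq_coef_inj l (T U : SQ l) :
  (forall i g n, sq_coef T i g n = sq_coef U i g n) -> T = U.
Proof.
move=> eTU; apply: functional_extensionality => i.
move: (eTU i false) (eTU i true); rewrite /sq_coef.
by case: (T i) (U i) => [a b] [c d] /= ea eb; congr (_, _); apply/polyP.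
Qed.

Definition euler_ev (c : CC) (i : nat) (g : bool) (n : nat) : CC :=
  c + (i + g + 2 * n)%:R / 2%:R.

Lemma addr_half_natr_inj {c : CC} {m n} : c + m%:R / 2%:R = c + n%:R / 2%:R -> m = n.
Proof.
move/addrI/(mulIf _) => eq_mn.
have /eq_mn /eqP : (2%:R : CC)^-1 != 0 by rewrite invr_eq0 pnatr_eq0.
by rewrite eqr_nat => /eqP.
Qed.

Section Operators.
Variables (lam mu k : CC) (p : bool) (l : nat).

Definition SQ_euler : SQ l -> SQ l := SQ_act lam mu k p ('X, 0).
Definition SQ_dx : SQ l -> SQ l := SQ_act lam mu k p (1, 0).

Lemma sq_coef_euler T i g n :
  sq_coef (SQ_euler T) i g n = euler_ev (mu - lam - k) i g n * sq_coef T i g n.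
Proof.
rewrite /sq_coef /SQ_euler SQ_act_even_affine ?size_polyX // derivX /euler_ev.
case: g => /=; rewrite !mul1r coefD coefZ coefXM coef_deriv;
  by case: n => [|n] /=; rewrite ?mulr_natr !natrD ?natrM; field.
Qed.

Lemma sq_coef_dx T i g n : sq_coef (SQ_dx T) i g n = sq_coef T i g n.+1 *+ n.+1.
Proof.
have d1 : (1 : {poly CC})^`() = 0 by rewrite -polyC1 derivC.
rewrite /sq_coef /SQ_dx SQ_act_even_affine ?size_poly1 // d1.
by case: g => /=; rewrite !mul1r mul0r scaler0 addr0 coef_deriv.
Qed.

Definition SQ_euler_sub (e : CC) (T : SQ l) : SQ l :=
  fun i => SQ_euler T i + sf_scale (- e) (T i).

Definition SQ_euler_prod (s : seq CC) (T : SQ l) : SQ l := foldr SQ_euler_sub T s.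

Lemma sq_coef_euler_sub e T i g n :
  sq_coef (SQ_euler_sub e T) i g n = (euler_ev (mu - lam - k) i g n - e) * sq_coef T i g n.
Proof.
rewrite {1}/sq_coef sf_compD sf_compZ coefD coefZ -!/(sq_coef _ _ _ _).
by rewrite sq_coef_euler mulrBl mulNr.
Qed.

Lemma sq_coef_euler_prod s T i g n :
  sq_coef (SQ_euler_prod s T) i g n =
  (\prod_(e <- s) (euler_ev (mu - lam - k) i g n - e)) * sq_coef T i g n.
Proof.
elim: s => [|e s IHs]; first by rewrite big_nil mul1r.
by rewrite sq_coef_euler_sub IHs big_cons mulrA.
Qed.
End Operators.
Arguments SQ_dx lam mu k p {l}.
Arguments SQ_euler_sub lam mu k p {l}.
Arguments SQ_euler_prod lam mu k p {l}.

Definition kerdx_eigenvalue lam mu k p l (e : CC) : Prop :=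
  exists T : SQ l, [/\ T <> sq_zero l, SQ_dx lam mu k p T = sq_zero l
                     & SQ_euler_sub lam mu k p e T = sq_zero l].

Lemma sq_coef_nonzero l (T : SQ l) : T <> sq_zero l -> exists i g n, sq_coef T i g n != 0.
Proof.
move=> T0; apply: NNPP => coefs0; apply: T0; apply: sq_coef_inj => i g n.
rewrite sq_coef_zero; apply/eqP; apply: contraT => Tn0.
by case: coefs0; exists i, g, n.
Qed.

Lemma kerdx_eigenvalueP {lam mu k p l e} :
  kerdx_eigenvalue lam mu k p l e ->
  exists2 m, (m <= l)%N & e = mu - lam - k + m%:R / 2%:R.
Proof.
move=> [T [/sq_coef_nonzero [i [g [n Tn]]] dxT eT]].
have n0 : n = 0%N.
  case: n Tn => // n Tn; move/(congr1 (fun U => sq_coef U i g n)): dxT.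
  by rewrite sq_coef_dx sq_coef_zero => /eqP; rewrite mulrn_eq0 (negbTE Tn).
exists (i + g)%N; first by move: (ltn_ord i) (leq_b1 g); lia.
move/(congr1 (fun U => sq_coef U i g n)): eT.
rewrite sq_coef_euler_sub sq_coef_zero /euler_ev n0 muln0 addn0 => /eqP.
by rewrite mulf_eq0 -n0 (negbTE Tn) orbF subr_eq0 => /eqP.
Qed.

Definition sq_unit l (i0 : 'I_l) (g0 : bool) : SQ l :=
  fun i => if i == i0 then (if g0 then (0, 1) else (1, 0)) else 0.
Arguments sq_unit {l}.

Lemma sq_coef_unit l (i0 : 'I_l) g0 i g n :
  sq_coef (sq_unit i0 g0) i g n = ((i == i0) && (g == g0) && (n == 0%N))%:R.
Proof.
rewrite /sq_coef /sq_unit; case: eqP => _ /=; last by case: g; rewrite coef0.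
by case: g0; case: g; rewrite /= ?coef0 ?coef1 ?andbF.
Qed.

Lemma kerdx_eigenvalue_unit lam mu k p {l} (i : 'I_l) g :
  kerdx_eigenvalue lam mu k p l (euler_ev (mu - lam - k) i g 0).
Proof.
exists (sq_unit i g); split.
- move/(congr1 (fun U => sq_coef U i g 0)).
  by rewrite sq_coef_unit sq_coef_zero !eqxx => /eqP; rewrite oner_eq0.
- apply: sq_coef_inj => j h n.
  by rewrite sq_coef_dx sq_coef_unit sq_coef_zero /= andbF mul0rn.
- apply: sq_coef_inj => j h n; rewrite sq_coef_euler_sub sq_coef_unit sq_coef_zero.
  have [/andP[/andP[/eqP-> /eqP->] /eqP->]|_] :=
    boolP ((j == i) && (h == g) && (n == 0%N)).
    by rewrite subrr mul0r.
  by rewrite mulr0.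
Qed.

Lemma kerdx_eigenvalue_extremes lam mu k p {l} : (0 < l)%N ->
  kerdx_eigenvalue lam mu k p l (mu - lam - k) /\
  kerdx_eigenvalue lam mu k p l (mu - lam - k + l%:R / 2%:R).
Proof.
move=> l_gt0; have l1_lt : (l.-1 < l)%N by rewrite ltn_predL.
split.
- have := kerdx_eigenvalue_unit lam mu k p (Ordinal l_gt0) false.
  by rewrite /euler_ev mul0r addr0.
- have := kerdx_eigenvalue_unit lam mu k p (Ordinal l1_lt) true.
  by rewrite /euler_ev /= muln0 addn0 addn1 prednK.
Qed.

Definition sq_homogeneous l (T : SQ l) (b : bool) : Prop :=
  forall i g n, sq_coef T i g n != 0 -> odd (i + g) = b.
Arguments sq_homogeneous {l}.

Lemma sq_homogeneousP l (T : SQ l) b :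
  (forall (i : 'I_l) (g : bool), g (+) odd i != b -> sf_part g (T i) = 0) <->
  sq_homogeneous T b.
Proof.
have part0 g (H : sfun) : sf_part g H = 0 <-> sf_comp g H = 0.
  by case: H => x y; case: g; rewrite /sf_part /sf_comp /=; split=> [/pair_equal_spec[]|->].
have odd_addb i (g : bool) : odd (i + g) = g (+) odd i by rewrite oddD addbC; case: g.
split=> [T0 i g n | homT i g gb].
- move=> Tn; apply/eqP; apply: contraNT Tn => gb; apply/eqP.
  rewrite /sq_coef (proj1 (part0 _ _)) ?coef0 //.
  by apply: T0; rewrite -odd_addb.
- apply/part0/polyP => n; rewrite coef0; apply/eqP; apply: contraNT gb => Tn.
  by rewrite -odd_addb (homT i g n Tn).
Qed.

Lemma sq_even_homogeneous p l (T : SQ l) : sq_even p T <-> sq_homogeneous T p.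
Proof.
rewrite -sq_homogeneousP /sq_even.
by split=> T0 i g gb; apply: T0; move: gb; case: p; case: g; case: odd.
Qed.

Lemma sq_odd_homogeneous p l (T : SQ l) : sq_odd p T <-> sq_homogeneous T (~~ p).
Proof.
rewrite -sq_homogeneousP /sq_odd.
by split=> T0 i g gb; apply: T0; move: gb; case: p; case: g; case: odd.
Qed.

Definition euler_evs_of_parity (c : CC) (b : bool) (M : nat) : seq CC :=
  [seq c + m%:R / 2%:R | m <- iota 0 M & odd m == b].

Section Annihilation.
Variables (lam mu k : CC) (p : bool) (l : nat).
Local Notation c := (mu - lam - k).

Lemma homogeneous_annihilated (T : SQ l) b : sq_homogeneous T b ->
  exists M, SQ_euler_prod lam mu k p (euler_evs_of_parity c b M) T = sq_zero l.
Proof.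
move=> homT; set mx := (\max_(i < l) (size (T i).1 + size (T i).2))%N.
exists (l + 2 * mx).+2; apply: sq_coef_inj => i g n.
rewrite sq_coef_euler_prod sq_coef_zero.
have [->|Tn] := eqVneq (sq_coef T i g n) 0; first by rewrite mulr0.
apply/eqP; rewrite mulf_eq0 prodf_seq_eq0; apply/orP; left; apply/hasP.
exists (euler_ev c i g n); last by rewrite /= subrr.
apply/mapP; exists (i + g + 2 * n)%N => //.
rewrite mem_filter mem_iota add0n oddD oddM addbF (homT _ _ _ Tn) eqxx /=.
have n_lt : (n < size (sf_comp g (T i)))%N.
  by rewrite ltnNge; apply: contra Tn => size_le; rewrite /sq_coef nth_default.
have size_le : (size (sf_comp g (T i)) <= mx)%N.
  by apply: leq_trans (leq_bigmax i); case: g {Tn n_lt} => /=; rewrite ?leq_addl ?leq_addr.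
by move: (ltn_ord i) (leq_b1 g); lia.
Qed.

Lemma annihilated_homogeneous (T : SQ l) b M :
  SQ_euler_prod lam mu k p (euler_evs_of_parity c b M) T = sq_zero l -> sq_homogeneous T b.
Proof.
move=> annT i g n Tn; move/(congr1 (fun U => sq_coef U i g n)): annT.
rewrite sq_coef_euler_prod sq_coef_zero => /eqP.
rewrite mulf_eq0 (negbTE Tn) orbF prodf_seq_eq0 => /hasP[e /mapP[m]].
rewrite mem_filter => /andP[/eqP <- _] -> /=.
rewrite subr_eq0 /euler_ev => /eqP/addr_half_natr_inj <-.
by rewrite [RHS]oddD oddM /= addbF.
Qed.

End Annihilation.

Section Intertwining.
Variables (lam mu k lam' mu' k' : CC) (p p' : bool) (l l' : nat) (phi : SQ l -> SQ l').
Hypothesis equiv_phi : SQ_equiv lam mu k p lam' mu' k' p' phi.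

Lemma equiv_zero : phi (sq_zero l) = sq_zero l'.
Proof.
case: equiv_phi => -[_ phiZ] _ _.
have scale0 l0 (T : SQ l0) : (fun i => sf_scale 0 (T i)) = sq_zero l0.
  by apply: functional_extensionality => i; rewrite sf_scale0r.
by rewrite -(scale0 _ (sq_zero l)) phiZ scale0.
Qed.

Lemma equiv_dx T : phi (SQ_dx lam mu k p T) = SQ_dx lam' mu' k' p' (phi T).
Proof. by case: equiv_phi => _ _; apply. Qed.

Lemma equiv_euler_sub e T :
  phi (SQ_euler_sub lam mu k p e T) = SQ_euler_sub lam' mu' k' p' e (phi T).
Proof. by case: equiv_phi => -[phiD phiZ] _ phiK; rewrite /SQ_euler_sub phiD phiZ phiK. Qed.

Lemma equiv_euler_prod s T :
  phi (SQ_euler_prod lam mu k p s T) = SQ_euler_prod lam' mu' k' p' s (phi T).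
Proof. by elim: s => [|e s IHs] //=; rewrite equiv_euler_sub IHs. Qed.

Lemma equiv_nonzero T : T <> sq_zero l -> phi T <> sq_zero l'.
Proof.
case: equiv_phi => _ [psi phiK _] _ T0 phiT0; apply: T0.
by rewrite -[T]phiK phiT0 -equiv_zero phiK.
Qed.

Lemma equiv_kerdx_eigenvalue e :
  kerdx_eigenvalue lam mu k p l e -> kerdx_eigenvalue lam' mu' k' p' l' e.
Proof.
move=> [T [T0 dxT eT]]; exists (phi T); split.
- exact: equiv_nonzero T0.
- by rewrite -equiv_dx dxT equiv_zero.
- by rewrite -equiv_euler_sub eT equiv_zero.
Qed.

Lemma equiv_homogeneous : mu - lam - k = mu' - lam' - k' ->
  forall T b, sq_homogeneous T b -> sq_homogeneous (phi T) b.
Proof.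
move=> c_eq T b /(homogeneous_annihilated lam mu k p)[M annT].
apply: (annihilated_homogeneous lam' mu' k' p' _ _ _ M).
by rewrite -c_eq -equiv_euler_prod annT equiv_zero.
Qed.

End Intertwining.
Arguments equiv_kerdx_eigenvalue {lam mu k lam' mu' k' p p' l l' phi} equiv_phi {e}.
Arguments equiv_homogeneous {lam mu k lam' mu' k' p p' l l' phi}.

Lemma SQ_equiv_inv {lam mu k lam' mu' k' p p' l l'} {phi : SQ l -> SQ l'} :
  SQ_equiv lam mu k p lam' mu' k' p' phi ->
  exists psi : SQ l' -> SQ l, SQ_equiv lam' mu' k' p' lam mu k p psi.
Proof.
case=> -[phiD phiZ] [psi phiK psiK] phiA; exists psi.
have inj_phi := can_inj phiK.
split; [split|exists phi|] => // [U1 U2|c U|F U]; apply: inj_phi.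
- by rewrite phiD !psiK.
- by rewrite phiZ !psiK.
- by rewrite phiA !psiK.
Qed.

Lemma equiv_shift_length {lam mu k lam' mu' k' p p' l l'} {phi : SQ l -> SQ l'} :
  (0 < l)%N -> (0 < l')%N -> SQ_equiv lam mu k p lam' mu' k' p' phi ->
  mu - lam - k = mu' - lam' - k' /\ l = l'.
Proof.
move=> l_gt0 l'_gt0 equiv_phi; have [psi equiv_psi] := SQ_equiv_inv equiv_phi.
set c := mu - lam - k; set c' := mu' - lam' - k'.
have [min_c max_c] := kerdx_eigenvalue_extremes lam mu k p l_gt0.
have [min_c' max_c'] := kerdx_eigenvalue_extremes lam' mu' k' p' l'_gt0.
have [x _ cx] := kerdx_eigenvalueP (equiv_kerdx_eigenvalue equiv_phi min_c).
have [y _ cy] := kerdx_eigenvalueP (equiv_kerdx_eigenvalue equiv_psi min_c').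
rewrite -/c -/c' in cx cy.
have c_eq : c = c'.
  have : ((y + x)%N%:R : CC) / 2%:R = 0.
    by rewrite natrD mulrDl; apply: (addrI c); rewrite addr0 addrA -cy -cx.
  move/eqP; rewrite mulf_eq0 invr_eq0 !pnatr_eq0 orbF addn_eq0 => /andP[_ /eqP x0].
  by rewrite cx x0 mul0r addr0.
split=> //.
have [m m_le cm] := kerdx_eigenvalueP (equiv_kerdx_eigenvalue equiv_phi max_c).
have [m' m'_le cm'] := kerdx_eigenvalueP (equiv_kerdx_eigenvalue equiv_psi max_c').
rewrite -/c -/c' -c_eq in cm cm'.
by move: (addr_half_natr_inj cm) (addr_half_natr_inj cm'); lia.
Qed.

Theorem lemma2p3 (lam mu lam' mu' k k' : CC) (p p' : bool) (l l' : nat) :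
  (0 < l)%N -> (0 < l')%N ->
  forall phi : SQ l -> SQ l',
  SQ_equiv lam mu k p lam' mu' k' p' phi ->
  [/\ l = l', (mu - lam) - k = (mu' - lam') - k' &
      (if p == p' then even_map p p' phi else odd_map p p' phi)].
Proof.
move=> l_gt0 l'_gt0 phi equiv_phi.
have [c_eq l_eq] := equiv_shift_length l_gt0 l'_gt0 equiv_phi.
have hom := equiv_homogeneous equiv_phi c_eq.
split=> //; case: eqP => [<-|/eqP p_neq] T.
- by split=> [/sq_even_homogeneous|/sq_odd_homogeneous] /hom;
    rewrite ?sq_even_homogeneous ?sq_odd_homogeneous.
- have p'E : p' = ~~ p by case: p p' {equiv_phi} p_neq => [] [].
  rewrite p'E; split=> [/sq_even_homogeneous|/sq_odd_homogeneous] /hom;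
    by rewrite ?sq_even_homogeneous ?sq_odd_homogeneous ?negbK.
Qed.
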